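(* Let $\omega\in\widehat{\mathcal D}$. Then there exists $K=K(\omega)>1$ such that the sequence $\{M_n\}_{n=0}^\infty=\{M_n(\omega,K)\}$ is lacunary, i.e. there exists $C>1$ with $M_{n+1}\ge CM_n$ for all $n\in\mathbb N\cup\{0\}$.
   Context: A radial weight is a nonnegative $\omega\in L^1([0,1))$; $\widehat\omega(r)=\int_r^1\omega(s)ds>0$ for all $r\in[0,1)$. $\omega\in\widehat{\mathcal D}$ means $\widehat\omega(r)\le C\widehat\omega(\frac{1+r}2)$ for some $C>0$ and all $0\le r<1$. For $K>1$ and $n\in\mathbb N\cup\{0\}$, $r_n=r_n(\omega,K)=\inf\{r\in[0,1):\widehat\omega(r)=\widehat\omega(0)K^{-n}\}$, and $M_n=M_n(\omega,K)=E\big(\frac1{1-r_n}\big)$, where $E(x)$ is the integer part of $x$. *)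

From HB Require Import structures.
From mathcomp Require Import all_boot all_order all_algebra.
From mathcomp Require Import all_classical all_reals all_analysis.
Set Implicit Arguments. Unset Strict Implicit. Unset Printing Implicit Defensive.
Import Order.TTheory GRing.Theory Num.Theory.
Local Open Scope classical_set_scope.
Local Open Scope ring_scope.

Section Defs.
Variable R : realType.
Local Notation mu := (@lebesgue_measure R).

Definition omega_hat (w : R -> R) (r : R) : R :=
  Rintegral mu `[r, 1%R[ w.

Definition radial_weight (w : R -> R) : Prop :=
  [/\ (forall x, 0 <= x < 1 -> 0 <= w x),
      mu.-integrable `[0%R, 1%R[ (fun x => (w x)%:E) &
      (forall r, 0 <= r < 1 -> 0 < omega_hat w r)].

Definition Dhat (w : R -> R) : Prop :=
  exists C : R, 0 < C /\
    forall r, 0 <= r < 1 -> omega_hat w r <= C * omega_hat w ((1 + r) / 2).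

Definition r_seq (w : R -> R) (K : R) (n : nat) : R :=
  inf [set r : R | 0 <= r < 1 /\ omega_hat w r = omega_hat w 0 * K ^- n].

Definition M_seq (w : R -> R) (K : R) (n : nat) : int :=
  Num.floor (1 / (1 - r_seq w K n)).

End Defs.

From HB Require Import structures.
From mathcomp Require Import all_boot all_order all_algebra.
From mathcomp Require Import all_classical all_reals all_analysis.
From mathcomp Require Import ring lra measurable_realfun.
Set Implicit Arguments. Unset Strict Implicit. Unset Printing Implicit Defensive.
Import Order.TTheory GRing.Theory Num.Theory.
Local Open Scope ring_scope.
Local Open Scope classical_set_scope.

(* [omega_hat w] is continuous and nonincreasing on [0,1), so every
   level [omega_hat w 0 * K^-n] is attained and [r_n] lies in [0,1). If
   [omega_hat w r <= C * omega_hat w ((1 + r) / 2)] and [K > C], then passing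
   from level n to level n+1 divides [omega_hat w] by more than [C], which
   forces [r_{n+1} >= (1 + r_n) / 2], i.e. [1 - r_{n+1} <= (1 - r_n) / 2].
   Hence [1 / (1 - r_n)] at least doubles, and so does its integer part. *)

Lemma floor_inv_one_sub_double (R : realType) (r s : R) :
  r < 1 -> s < 1 -> (1 + r) / 2 <= s ->
  2 * (Num.floor (1 / (1 - r)))%:~R <= (Num.floor (1 / (1 - s)))%:~R :> R.
Proof.
move=> r1 s1 rs.
set x := 1 / (1 - r); set y := 1 / (1 - s).
have xxy : x + x <= y.
  have -> : x + x = 1 / ((1 - r) / 2) by rewrite /x; field; lra.
  by rewrite /y !div1r lef_pV2 ?posrE; lra.
have floor_xx : Num.floor x + Num.floor x <= Num.floor y.
  by rewrite floor_ge_int rmorphD /=; have := floor_le x; lra.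
by rewrite mulr_natl mulr2n -rmorphD /= ler_int.
Qed.

Section OmegaHat.
Variable R : realType.
Local Notation mu := (@lebesgue_measure R).
Variable w : R -> R.
Hypothesis w_ge0 : forall x, 0 <= x < 1 -> 0 <= w x.
Hypothesis w_int : mu.-integrable `[0%R, 1%R[ (fun x => (w x)%:E).

Let W x := parameterized_integral mu 0 x w.

Lemma integrable_itv01 : mu.-integrable `[0%R, 1%R] (EFin \o w).
Proof.
case/integrableP: w_int => mw fw; apply/integrableP; split.
  exact/emeasurable_fun_itv_bndo_bndcP.
rewrite -integral_itv_bndo_bndc //.
exact: measurableT_comp.
Qed.

Let omega_hatE r : 0 <= r <= 1 -> omega_hat w r = W 1 - W r.
Proof.
move=> /andP[r0 r1]; rewrite /W /parameterized_integral.
rewrite (@Rintegral_itvB _ _ (BLeft 0) (BRight 1) r integrable_itv01) ?bnd_simp //.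
rewrite Rintegral_itv_obnd_cbnd; last first.
  by apply: integrableS integrable_itv01 => //; apply: subset_itvr; rewrite bnd_simp.
rewrite /omega_hat Rintegral_itv_bndo_bndc //.
by apply: integrableS integrable_itv01 => //; apply: subset_itv; rewrite bnd_simp.
Qed.

Let W_le r s : 0 <= r <= s -> s < 1 -> W r <= W s.
Proof.
move=> /andP[r0 rs] s1.
have int_s : mu.-integrable `[0%R, s] (EFin \o w).
  by apply: integrableS integrable_itv01 => //; apply: subset_itvl; rewrite bnd_simp ltW.
rewrite -subr_ge0 /W /parameterized_integral.
rewrite (@Rintegral_itvB _ _ (BLeft 0) (BRight s) r int_s) ?bnd_simp //.
apply: Rintegral_ge0 => x /=; rewrite in_itv /= => /andP[rx xs]; apply: w_ge0.
by rewrite (le_trans r0 (ltW rx)) (le_lt_trans xs s1).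
Qed.

Lemma omega_hat_le r s : 0 <= r <= s -> s < 1 -> omega_hat w s <= omega_hat w r.
Proof.
move=> /andP[r0 rs] s1.
rewrite !omega_hatE ?(le_trans r0 rs) ?r0 ?(ltW s1) ?(le_trans rs (ltW s1)) //.
have := @W_le r s; rewrite r0 rs s1 => /(_ isT isT); lra.
Qed.

Lemma omega_hat_level t : 0 < t <= omega_hat w 0 ->
  exists2 r, 0 <= r < 1 & omega_hat w r = t.
Proof.
move=> /andP[t0 th].
have W0 : W 0 = 0 by rewrite /W /parameterized_integral set_itv1 Rintegral_set1.
have hat0 : omega_hat w 0 = W 1 by rewrite omega_hatE ?lexx ?ler01 // W0 subr0.
have W1t : Num.min (W 0) (W 1) <= W 1 - t <= Num.max (W 0) (W 1).
  by rewrite W0 -hat0 min_l ?max_r; [apply/andP; split|..]; lra.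
have [c + Wc] := IVT ler01 (parameterized_integral_continuous ler01 integrable_itv01) W1t.
rewrite in_itv /= => /andP[c0 c1].
have {}Wc : W c = W 1 - t := Wc.
have hat_c : omega_hat w c = t by rewrite omega_hatE ?c0 ?c1 // Wc; lra.
exists c => //; rewrite c0 lt_neqAle c1 andbT.
by apply/negP => /eqP c_eq1; move: hat_c; rewrite c_eq1 omega_hatE ?ler01 ?lexx //; lra.
Qed.

Variable K : R.
Hypothesis K_ge1 : 1 <= K.
Hypothesis hat0_gt0 : 0 < omega_hat w 0.

Let level n := omega_hat w 0 * K ^- n.

Let level_gt0 n : 0 < level n.
Proof. by rewrite mulr_gt0 // invr_gt0 exprn_gt0 // (lt_le_trans ltr01 K_ge1). Qed.

Let levelS n : level n.+1 = level n / K.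
Proof. by rewrite /level exprSr invfM mulrA. Qed.

Let level_attained n : exists2 r, 0 <= r < 1 & omega_hat w r = level n.
Proof.
apply: omega_hat_level; rewrite level_gt0 /=; apply: ler_piMr; first exact: ltW.
by rewrite invf_le1 ?exprn_ege1 ?exprn_gt0 // (lt_le_trans ltr01 K_ge1).
Qed.

Lemma r_seq_le n r : 0 <= r < 1 -> omega_hat w r = level n -> r_seq w K n <= r.
Proof.
move=> r01 hat_r; apply: ge_inf => //.
by exists 0 => y [/andP[]].
Qed.

Lemma r_seq_lt1 n : r_seq w K n < 1.
Proof.
have [r r01 hat_r] := level_attained n.
by apply: le_lt_trans (r_seq_le r01 hat_r) _; case/andP: r01.
Qed.

Variable C : R.
Hypothesis C_gt0 : 0 < C.
Hypothesis w_doubling :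
  forall r, 0 <= r < 1 -> omega_hat w r <= C * omega_hat w ((1 + r) / 2).

Lemma omega_hat_drop_midpoint a s : 0 <= a < 1 -> 0 <= s ->
  C * omega_hat w s < omega_hat w a -> (1 + a) / 2 <= s.
Proof.
move=> /andP[a0 a1] s0 drop; rewrite leNgt; apply/negP => s_lt.
have hat_mid : omega_hat w ((1 + a) / 2) <= omega_hat w s.
  by apply: omega_hat_le; [rewrite s0 ltW | lra].
have := @w_doubling a; rewrite a0 a1 => /(_ isT).
by have := ler_wpM2l (ltW C_gt0) hat_mid; lra.
Qed.

Hypothesis C_lt_K : C < K.

Lemma r_seq_midpoint_le n : (1 + r_seq w K n) / 2 <= r_seq w K n.+1.
Proof.
have [a a01 hat_a] := level_attained n.
have rn_le_a := r_seq_le a01 hat_a.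
apply: lb_le_inf; first by have [r ? ?] := level_attained n.+1; exists r.
move=> s [/andP[s0 _] hat_s].
suff : (1 + a) / 2 <= s by lra.
apply: omega_hat_drop_midpoint => //.
have K_gt0 := lt_trans C_gt0 C_lt_K.
rewrite hat_s hat_a -/(level n.+1) levelS mulrA ltr_pdivrMr //.
by rewrite mulrC ltr_pM2l.
Qed.

End OmegaHat.

Theorem lemma2p2 (R : realType) (w : R -> R) :
  radial_weight w -> Dhat w ->
  exists K : R, 1 < K /\
    exists C : R, 1 < C /\
      forall n : nat, C * (M_seq w K n)%:~R <= (M_seq w K n.+1)%:~R.
Proof.
move=> [w_ge0 w_int hat_gt0] [C [C_gt0 w_doubling]].
have hat0_gt0 : 0 < omega_hat w 0 by apply: hat_gt0; rewrite lexx ltr01.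
have C_lt_K : C < C + 1 by lra.
have K_ge1 : 1 <= C + 1 by lra.
exists (C + 1); split; first lra.
exists 2; split; first lra.
have r_lt1 := r_seq_lt1 w_int K_ge1 hat0_gt0.
move=> n; apply: floor_inv_one_sub_double; rewrite ?r_lt1 //.
exact: (r_seq_midpoint_le w_ge0 w_int K_ge1 hat0_gt0 C_gt0 w_doubling C_lt_K).
Qed.
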